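(* For any two undirected graphs $G,H$, with $G+H$ denoting their disjoint union, $\beta(G+H)=\beta(G)+\beta(H)$ and $\beta^*(G+H)=\beta^*(G)+\beta^*(H)$.
   Context: For an undirected graph $G$ on vertex set $[n]$, consider the index coding problem: a server holds messages $x_1,\dots,x_n\in\Sigma$ ($|\Sigma|>1$), receiver $i$ wants $x_i$ and knows $x_j$ for every neighbor $j$ of $i$. A solution is an encoding $\mathcal{E}:\Sigma^n\to\Sigma_P$ from which each receiver can recover its message given its side information, for all message values. $\beta_t(G)$ is the minimum of $\lceil\log_2|\Sigma_P|\rceil$ over solutions with $|\Sigma|=2^t$; $\beta(G)=\lim_t\beta_t(G)/t=\inf_t\beta_t(G)/t$. For a positive integer $t$, $t\cdot G$ denotes the disjoint union of $t$ copies of $G$, and $\beta^*(G)=\lim_{t\to\infty}\frac1t\beta_1(t\cdot G)=\inf_t\frac1t\beta_1(t\cdot G)$. *)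

From HB Require Import structures.
From mathcomp Require Import all_boot all_order all_algebra.
From mathcomp Require Import classical_sets reals.
Set Implicit Arguments. Unset Strict Implicit. Unset Printing Implicit Defensive.
Import Order.TTheory GRing.Theory Num.Theory.
Local Open Scope ring_scope.
Local Open Scope classical_set_scope.

Definition undirected (V : finType) (G : rel V) : Prop :=
  symmetric G /\ irreflexive G.

Definition gunion (V1 V2 : finType) (G : rel V1) (H : rel V2) : rel (V1 + V2)%type :=
  fun u v => match u, v with
             | inl a, inl b => G a b
             | inr a, inr b => H a b
             | _, _ => false
             end.

Definition gcopies (V : finType) (t : nat) (G : rel V) : rel ('I_t * V)%type :=
  fun u v => (u.1 == v.1) && G u.2 v.2.

(* E : Sigma^V -> P is an index coding solution for G: each receiver i has a
   decoder that, from the public message and its side information (the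
   messages at neighbours of i only), recovers x_i, for all message values. *)
Definition ic_solution (V : finType) (G : rel V) (S P : Type)
  (E : {ffun V -> S} -> P) : Prop :=
  exists D : V -> P -> {ffun V -> S} -> S,
    (forall i p (x y : {ffun V -> S}),
        (forall j, G i j -> x j = y j) -> D i p x = D i p y) /\
    (forall i (x : {ffun V -> S}), D i (E x) x = x i).

(* beta_t(G): minimum over solutions with |Sigma| = 2^t (Sigma = 'I_(2^t)) of
   ceil(log2 |Sigma_P|) = up_log 2 #|Sigma_P|. Realised as an infimum in R
   (the set is a nonempty set of naturals, so the infimum is the minimum). *)
Definition beta_t (R : realType) (V : finType) (G : rel V) (t : nat) : R :=
  inf [set x : R | exists (P : finType) (E : {ffun V -> 'I_(2 ^ t)} -> P),
                     ic_solution G E /\ x = (up_log 2 #|P|)%:R].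

Definition beta (R : realType) (V : finType) (G : rel V) : R :=
  inf [set x : R | exists t : nat, (0 < t)%N /\ x = beta_t R G t / t%:R].

Definition beta_star (R : realType) (V : finType) (G : rel V) : R :=
  inf [set x : R | exists t : nat, (0 < t)%N /\ x = beta_t R (@gcopies V t G) 1 / t%:R].

From HB Require Import structures.
From mathcomp Require Import all_boot all_order all_algebra.
From mathcomp Require Import boolp classical_sets reals.
From mathcomp Require Import zify ring lra.
Set Implicit Arguments. Unset Strict Implicit. Unset Printing Implicit Defensive.
Import Order.TTheory GRing.Theory Num.Theory.

(* A code for G is a proper colouring of the confusion graph on Sigma^V, where x and y
   are adjacent when they differ at some receiver but agree on its neighbourhood.
   Concatenating codes, after rescaling both to a common block length, gives
   beta(G + H) <= beta(G) + beta(H).  Conversely, a colour class of a code for G + H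
   restricts to independent sets of the two confusion graphs, so
   |Sigma^(V1 + V2)| <= |P| alpha(G) alpha(H).  The confusion graph of k copies of G is
   invariant under translations, so by a union bound about
   (|Sigma^V| / alpha(G))^k k |Sigma^V| translates of the k-th power of a maximum
   independent set cover Sigma^(kV), which colours it.  Combining the colourings for
   G and H and letting k grow yields beta(G) + beta(H) <= beta_t(G + H) / t.  The same
   argument over t copies and a binary alphabet handles beta*. *)

Section ConfusionGraph.
Variables (V S : finType) (G : rel V).

Definition confusable (x y : {ffun V -> S}) : bool :=
  [exists i, (x i != y i) && [forall j, G i j ==> (x j == y j)]].

Definition ic_code (P : finType) (E : {ffun V -> S} -> P) : Prop :=
  forall x y, confusable x y -> E x != E y.

Lemma confusablexx x : confusable x x = false.
Proof. by apply/existsP=> -[i]; rewrite eqxx. Qed.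

Lemma ic_code_id : ic_code id.
Proof. by move=> x y; apply: contraL => /eqP ->; rewrite confusablexx. Qed.

Lemma ic_solutionP (P : finType) (E : {ffun V -> S} -> P) :
  ic_solution G E <-> ic_code E.
Proof.
split.
  move=> [D [HD HE]] x y /existsP[i /andP[xy /forallP Nxy]].
  apply/eqP=> Exy; move/eqP: xy; apply.
  rewrite -(HE i x) -(HE i y) Exy; apply: HD => j Gij.
  by move/implyP: (Nxy j) => /(_ Gij)/eqP.
move=> HE.
(* The fallback value must not depend on x i, which receiver i does not know. *)
pose D i (p : P) (x : {ffun V -> S}) :=
  if [pick z | (E z == p) && [forall j, G i j ==> (z j == x j)]] is Some z
  then z i else if [pick s : S] is Some s then s else x i.
exists D; split.
- move=> i p x y Nxy; rewrite /D.
  rewrite (@eq_pick _ _ (fun z => (E z == p) && [forall j, G i j ==> (z j == y j)])).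
    by case: pickP => // _; case: pickP => // /(_ (x i)).
  move=> z /=; congr (_ && _); apply: eq_forallb => j.
  by case Gij: (G i j) => //=; rewrite (Nxy j Gij).
- move=> i x; rewrite /D; case: pickP => [z /andP[/eqP Ez /forallP Nz]|].
    apply/eqP; apply: contraT => zx.
    have: confusable z x by apply/existsP; exists i; rewrite zx; apply/forallP.
    by move/HE; rewrite Ez eqxx.
  by move/(_ x); rewrite eqxx /=; case/negP; apply/forallP=> j; apply/implyP.
Qed.

End ConfusionGraph.

Lemma ic_code_comp (V V' S S' P : finType) (G : rel V) (G' : rel V')
    (F : {ffun V' -> S'} -> {ffun V -> S}) (E : {ffun V -> S} -> P) :
  (forall x y, confusable G' x y -> confusable G (F x) (F y)) ->
  ic_code G E -> ic_code G' (E \o F).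
Proof. by move=> FG EG x y /FG /EG. Qed.

Lemma eq_card_bij (A B : finType) : #|A| = #|B| -> exists h : A -> B, bijective h.
Proof.
move=> AB; exists (fun a => enum_val (cast_ord AB (enum_rank a))).
exists (fun b => enum_val (cast_ord (esym AB) (enum_rank b))) => x.
  by rewrite enum_valK cast_ordK enum_rankK.
by rewrite enum_valK cast_ordKV enum_rankK.
Qed.

Lemma ic_code_alphabet (V S S' P : finType) (G : rel V) (E : {ffun V -> S} -> P) :
  #|S'| = #|S| -> ic_code G E -> exists E' : {ffun V -> S'} -> P, ic_code G E'.
Proof.
move=> /eq_card_bij[h /bij_inj h_inj] EG; eexists.
apply: (@ic_code_comp _ _ _ _ _ _ _ (fun x => [ffun v => h (x v)])) EG.
move=> x y /existsP[i /andP[xy /forallP Nxy]]; apply/existsP; exists i.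
rewrite !ffunE (inj_eq h_inj) xy /=; apply/forallP=> j; rewrite !ffunE.
by apply/implyP=> /(implyP (Nxy j)) /eqP ->.
Qed.

Lemma ic_code_vertex_map (V V' S P : finType) (G : rel V) (G' : rel V')
    (g : V -> V') (E : {ffun V -> S} -> P) :
  (forall i', exists i, g i = i') -> (forall i j, G i j -> G' (g i) (g j)) ->
  ic_code G E -> exists E' : {ffun V' -> S} -> P, ic_code G' E'.
Proof.
move=> g_onto g_hom EG; eexists.
apply: (@ic_code_comp _ _ _ _ _ _ _ (fun z => [ffun v => z (g v)])) EG.
move=> x y /existsP[i' /andP[xy /forallP Nxy]]; have [i gi] := g_onto i'; subst i'.
apply/existsP; exists i; rewrite !ffunE xy /=.
by apply/forallP=> j; rewrite !ffunE; apply/implyP=> /g_hom/(implyP (Nxy (g j))).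
Qed.

Section DisjointUnion.
Variables (V1 V2 S : finType) (G : rel V1) (H : rel V2).

Definition ffun_inl (z : {ffun (V1 + V2)%type -> S}) : {ffun V1 -> S} := [ffun v => z (inl v)].
Definition ffun_inr (z : {ffun (V1 + V2)%type -> S}) : {ffun V2 -> S} := [ffun v => z (inr v)].

Lemma confusable_gunion z z' : confusable (gunion G H) z z' =
  confusable G (ffun_inl z) (ffun_inl z') || confusable H (ffun_inr z) (ffun_inr z').
Proof.
apply/existsP/orP => [[[i|i] /andP[zz' /forallP Nzz']]|].
- left; apply/existsP; exists i; rewrite !ffunE zz' /=.
  by apply/forallP=> j; rewrite !ffunE; exact: (Nzz' (inl j)).
- right; apply/existsP; exists i; rewrite !ffunE zz' /=.
  by apply/forallP=> j; rewrite !ffunE; exact: (Nzz' (inr j)).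
case=> /existsP[i /andP[+ /forallP Nzz']]; rewrite !ffunE => zz'.
- by exists (inl i); rewrite zz'; apply/forallP=> -[j|j] //=; move: (Nzz' j); rewrite !ffunE.
- by exists (inr i); rewrite zz'; apply/forallP=> -[j|j] //=; move: (Nzz' j); rewrite !ffunE.
Qed.

Lemma ic_code_gunion (P1 P2 : finType)
    (E1 : {ffun V1 -> S} -> P1) (E2 : {ffun V2 -> S} -> P2) :
  ic_code G E1 -> ic_code H E2 ->
  ic_code (gunion G H) (fun z => (E1 (ffun_inl z), E2 (ffun_inr z))).
Proof.
move=> E1G E2H z z'; rewrite confusable_gunion xpair_eqE negb_and.
by case/orP => [/E1G|/E2H] ->; rewrite ?orbT.
Qed.

End DisjointUnion.

Section Copies.
Variables (k : nat) (V S : finType) (G : rel V).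

Definition ffun_copy (c : 'I_k) (z : {ffun ('I_k * V)%type -> S}) : {ffun V -> S} :=
  [ffun v => z (c, v)].

Lemma ic_code_gcopies (P : finType) (E : {ffun V -> S} -> P) :
  ic_code G E -> ic_code (@gcopies _ k G) (fun z => [ffun c => E (ffun_copy c z)]).
Proof.
move=> EG z z' /existsP[[c i] /andP[zz' /forallP Nzz']].
have: confusable G (ffun_copy c z) (ffun_copy c z').
  apply/existsP; exists i; rewrite !ffunE zz' /=; apply/forallP=> j; rewrite !ffunE.
  by move: (Nzz' (c, j)); rewrite /gcopies /= eqxx.
by move/EG; apply: contra => /eqP/ffunP/(_ c); rewrite !ffunE => ->.
Qed.

Lemma ic_code_gcopies_power (P : finType) (E : {ffun ('I_k * V)%type -> S} -> P) :
  ic_code (@gcopies _ k G) E -> exists E' : {ffun V -> {ffun 'I_k -> S}} -> P, ic_code G E'.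
Proof.
move=> EG; eexists.
apply: (@ic_code_comp _ _ _ _ _ _ _
  (fun x : {ffun V -> {ffun 'I_k -> S}} => [ffun cv : 'I_k * V => x cv.2 cv.1])) EG.
move=> x y /existsP[i /andP[xy /forallP Nxy]].
have [c xyc] : exists c, x i c != y i c.
  apply/existsP; move: xy; apply: contraNT; rewrite negb_exists => /forallP xy.
  by apply/eqP/ffunP=> c; apply/eqP; rewrite -[_ == _]negbK xy.
apply/existsP; exists (c, i); rewrite !ffunE /= xyc /=.
apply/forallP=> -[c' j]; rewrite !ffunE /gcopies /=.
by apply/implyP=> /andP[_ /(implyP (Nxy j)) /eqP ->].
Qed.

End Copies.

Section Translates.
Variables (W : finType) (S : finZmodType).
Local Notation M := {ffun W -> S}.
Local Open Scope ring_scope.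

Lemma confusable_subr (G : rel W) (g x y : M) :
  confusable G (x - g) (y - g) = confusable G x y.
Proof.
apply: eq_existsb => i; rewrite !ffunE (inj_eq (addIr _)); congr (_ && _).
by apply: eq_forallb => j; rewrite !ffunE (inj_eq (addIr _)).
Qed.

Lemma card_bigcup_le (T I : finType) (B : I -> {set T}) :
  (#|\bigcup_i B i| <= \sum_i #|B i|)%N.
Proof.
elim/big_rec2: _ => [|i A n _ IH]; first by rewrite cards0.
by apply: leq_trans (leq_card_setU _ _).1 _; rewrite leq_add2l.
Qed.

(* Union bound: the f for which some y is missed by every translate y - f i
   number at most #|M| * (#|M| - #|J|) ^ m. *)
Lemma translates_cover (J : {set M}) (m : nat) :
  (#|M| * (#|M| - #|J|) ^ m < #|M| ^ m)%N ->
  exists f : {ffun 'I_m -> M}, forall y, exists i, y - f i \in J.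
Proof.
move=> count_lt.
pose miss y := [set g : M | y - g \notin J].
pose bad y := [set f : {ffun 'I_m -> M} | f \in ffun_on (miss y)].
have card_miss y : #|miss y| = (#|M| - #|J|)%N.
  have -> : miss y = ~: [set y - x | x : M in J].
    apply/setP=> g; rewrite !inE; congr negb; apply/idP/imsetP => [gJ|[x xJ ->]].
      by exists (y - g); rewrite ?subKr.
    by rewrite subKr.
  by rewrite cardsCs finset.setCK card_imset //; apply: subrI.
have card_bad y : #|bad y| = ((#|M| - #|J|) ^ m)%N.
  have := @card_ffun_on 'I_m _ (miss y); rewrite card_ord card_miss => <-.
  by apply: eq_card => f; rewrite inE.
have : (#|\bigcup_y bad y| < #|{ffun 'I_m -> M}|)%N.
  apply: leq_ltn_trans (card_bigcup_le bad) _.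
  under eq_bigr do rewrite card_bad.
  have -> : #|{ffun 'I_m -> M}| = (#|M| ^ m)%N by rewrite card_ffun card_ord.
  by rewrite sum_nat_const.
move=> bad_lt; have : (0 < #|~: \bigcup_y bad y|)%N by rewrite cardsCs finset.setCK subn_gt0.
case/card_gt0P => f; rewrite inE => /bigcupP f_good; exists f => y.
apply/existsP; apply: contraT; rewrite negb_exists => /forallP f_miss.
by case: f_good; exists y => //; rewrite inE; apply/ffun_onP => i; rewrite inE.
Qed.

End Translates.

Lemma bernoulli_expn (a b r : nat) : b ^ r.+1 + r.+1 * a * b ^ r <= (b + a) ^ r.+1.
Proof.
elim: r => [|r IH]; first by rewrite !expn1 expn0 muln1 mul1n.
rewrite [(b + a) ^ r.+2]expnS.
apply: (@leq_trans ((b + a) * (b ^ r.+1 + r.+1 * a * b ^ r))); last by rewrite leq_mul2l IH orbT.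
rewrite !expnS; nia.
Qed.

Lemma double_expn_subn_le (Q a r : nat) : 0 < a <= Q -> Q <= r * a -> 2 * (Q - a) ^ r <= Q ^ r.
Proof.
move=> /andP[a_gt0 aQ]; case: r => [|r] Qr; first by move: Qr; rewrite mul0n; lia.
have := bernoulli_expn a (Q - a) r; rewrite subnK //.
have : (Q - a) * (Q - a) ^ r <= r.+1 * a * (Q - a) ^ r.
  by rewrite leq_mul2r (leq_trans (leq_subr a Q) Qr) orbT.
rewrite expnS mul2n -addnn => uv; apply: leq_trans; by rewrite leq_add2l.
Qed.

Lemma cover_count_lt (Q a r L : nat) : 0 < a <= Q -> Q <= r * a -> Q < 2 ^ L ->
  Q * (Q - a) ^ (r * L) < Q ^ (r * L).
Proof.
move=> aQ Qr QL; have /andP[a_gt0 a_leQ] := aQ.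
have HL : 2 ^ L * (Q - a) ^ (r * L) <= Q ^ (r * L).
  rewrite !expnM -expnMn leq_exp2r ?double_expn_subn_le //.
  by case: L QL => //; rewrite expn0; lia.
case: (posnP ((Q - a) ^ (r * L))) => [->|pos]; last by apply: leq_trans HL; rewrite ltn_mul2r pos.
by rewrite muln0 expn_gt0 (leq_trans a_gt0 a_leQ).
Qed.

Section Independence.
Variables (V S : finType) (G : rel V).

Definition conf_indep (A : {set {ffun V -> S}}) : bool :=
  [forall x in A, forall y in A, ~~ confusable G x y].

Definition conf_alpha : nat := \max_(A : {set {ffun V -> S}} | conf_indep A) #|A|.

Lemma conf_indepP (A : {set {ffun V -> S}}) :
  reflect {in A &, forall x y, ~~ confusable G x y} (conf_indep A).
Proof.
apply: (iffP forall_inP) => [indA x y xA yA | indA x xA].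
  exact: (forall_inP (indA x xA)).
by apply/forall_inP => y; apply: indA.
Qed.

Lemma conf_alpha_max (A : {set {ffun V -> S}}) : conf_indep A -> #|A| <= conf_alpha.
Proof. exact: leq_bigmax_cond. Qed.

Lemma conf_alpha_attained : exists2 I : {set {ffun V -> S}}, conf_indep I & #|I| = conf_alpha.
Proof.
have : 0 < #|[pred A : {set {ffun V -> S}} | conf_indep A]|.
  by apply/card_gt0P; exists finset.set0; apply/conf_indepP => x y; rewrite inE.
move/(eq_bigmax_cond (fun A : {set {ffun V -> S}} => #|A|)) => [I indI maxI].
by exists I => //; exact: esym maxI.
Qed.

Lemma conf_alpha_gt0 (x : {ffun V -> S}) : 0 < conf_alpha.
Proof.
rewrite -(cards1 x); apply: conf_alpha_max; apply/conf_indepP => y z.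
by rewrite !inE => /eqP-> /eqP->; rewrite confusablexx.
Qed.

Lemma conf_alpha_le_card : conf_alpha <= #|{ffun V -> S}|.
Proof. by have [I _ <-] := conf_alpha_attained; apply: max_card. Qed.

Lemma ic_code_fibre_indep (P : finType) (E : {ffun V -> S} -> P) (p : P) :
  ic_code G E -> conf_indep [set x | E x == p].
Proof.
move=> EG; apply/conf_indepP => x y; rewrite !inE => /eqP Ex /eqP Ey.
by apply/negP => /EG; rewrite Ex Ey eqxx.
Qed.

End Independence.

Section UnionIndependence.
Variables (V1 V2 S : finType) (G : rel V1) (H : rel V2).

(* Sort Q by its restriction to V1: the restrictions form an independent set of G,
   and on each fibre the restriction to V2 is injective with independent image. *)
Lemma conf_indep_gunion_card (Q : {set {ffun (V1 + V2)%type -> S}}) :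
  conf_indep (gunion G H) Q -> #|Q| <= conf_alpha S G * conf_alpha S H.
Proof.
move=> /conf_indepP indQ.
rewrite -sum1_card (partition_big_imset (@ffun_inl V1 V2 S)) /=.
apply: (@leq_trans (\sum_(a in [set ffun_inl x | x in Q]) conf_alpha S H)).
  apply: leq_sum => a _; rewrite sum1_card -(@card_in_imset _ _ (@ffun_inr V1 V2 S)).
    apply: conf_alpha_max; apply/conf_indepP => x y /imsetP[z /andP[zQ /eqP za] ->].
    move=> /imsetP[z' /andP[z'Q /eqP z'a] ->]; apply: contra (indQ z z' zQ z'Q).
    by rewrite confusable_gunion => ->; rewrite orbT.
  move=> z z' /andP[_ /eqP za] /andP[_ /eqP z'a] /ffunP zz'; apply/ffunP=> -[v|v].
    by move/ffunP: za => /(_ v); move/ffunP: z'a => /(_ v); rewrite !ffunE => -> ->.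
  by move: (zz' v); rewrite !ffunE.
rewrite sum_nat_const leq_mul2r; apply/orP; right.
apply: conf_alpha_max; apply/conf_indepP => x y /imsetP[z zQ ->] /imsetP[z' z'Q ->].
by apply: contra (indQ z z' zQ z'Q); rewrite confusable_gunion => ->.
Qed.

Lemma card_ffun_gunion_le (P : finType) (E : {ffun (V1 + V2)%type -> S} -> P) :
  ic_code (gunion G H) E ->
  #|{ffun V1 -> S}| * #|{ffun V2 -> S}| <= #|P| * (conf_alpha S G * conf_alpha S H).
Proof.
move=> EGH.
have -> : #|{ffun V1 -> S}| * #|{ffun V2 -> S}| = #|{ffun (V1 + V2)%type -> S}|.
  by rewrite !card_ffun card_sum expnD.
rewrite -sum1_card (partition_big E xpredT) //= -sum_nat_const.
apply: leq_sum => p _; rewrite sum1_card.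
apply: leq_trans (conf_indep_gunion_card (ic_code_fibre_indep p EGH)).
by apply: eq_leq; apply: eq_card => z; rewrite inE.
Qed.

End UnionIndependence.

Section PowerIndependence.
Variables (k : nat) (V S : finType) (G : rel V).

Definition indep_power (I : {set {ffun V -> S}}) : {set {ffun ('I_k * V)%type -> S}} :=
  [set [ffun cv : 'I_k * V => f cv.1 cv.2] | f : {ffun 'I_k -> {ffun V -> S}} in ffun_on I].

Lemma card_indep_power I : #|indep_power I| = #|I| ^ k.
Proof.
rewrite card_imset ?card_ffun_on ?card_ord // => f f' /ffunP ff'.
by apply/ffunP=> i; apply/ffunP=> v; move: (ff' (i, v)); rewrite !ffunE.
Qed.

Lemma conf_indep_power I : conf_indep G I -> conf_indep (@gcopies _ k G) (indep_power I).
Proof.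
move=> /conf_indepP indI; apply/conf_indepP => x y /imsetP[f /ffun_onP fI ->].
move=> /imsetP[f' /ffun_onP f'I ->]; apply/negP => /existsP[[i v] /andP[ff' /forallP Nff']].
have /negP := indI _ _ (fI i) (f'I i); apply; apply/existsP; exists v.
move: ff'; rewrite !ffunE /= => -> /=; apply/forallP=> w; apply/implyP=> Gvw.
by move: (Nff' (i, w)); rewrite /gcopies /= eqxx Gvw !ffunE.
Qed.

End PowerIndependence.

(* A word is encoded by the index of some translate of the power of a maximum
   independent set that contains it. *)
Lemma ic_code_gcopies_cover (V : finType) (S : finZmodType) (G : rel V) (k : nat) :
  0 < k -> exists (P : finType) (E : {ffun ('I_k * V)%type -> S} -> P),
    ic_code (@gcopies _ k G) E /\
    0 < #|P| <= ((#|{ffun V -> S}| ^ k %/ conf_alpha S G ^ k).+1 * (k * #|{ffun V -> S}|)).+1.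
Proof.
move=> k_gt0; set c := #|{ffun V -> S}|; set a := conf_alpha S G.
have [I indI cardI] := conf_alpha_attained S G.
set J := indep_power k I.
have a_gt0 : 0 < a by apply: (conf_alpha_gt0 G [ffun _ => 0%R]).
have cardM : #|{ffun ('I_k * V)%type -> S}| = c ^ k.
  by rewrite /c !card_ffun card_prod card_ord -expnM mulnC.
set m := (c ^ k %/ a ^ k).+1 * (k * c).
have [f f_cover] : exists f : {ffun 'I_m -> {ffun ('I_k * V)%type -> S}},
    forall y, exists i, (y - f i)%R \in J.
  apply: translates_cover; rewrite cardM card_indep_power cardI; apply: cover_count_lt.
  - by rewrite expn_gt0 a_gt0 leq_exp2r ?conf_alpha_le_card.
  - by apply: ltnW; apply: ltn_ceil; rewrite expn_gt0 a_gt0.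
  - by rewrite mulnC expnM ltn_exp2r // ltn_expl.
exists (option 'I_m), (fun z => [pick i | (z - f i)%R \in J]).
split; last by rewrite card_option card_ord ltnSn.
move=> z z' zz'; case: pickP => [i zi|]; last by case: (f_cover z) => j zj /(_ j); rewrite zj.
case: pickP => [i' z'i'|]; last by case: (f_cover z') => j z'j /(_ j); rewrite z'j.
apply/eqP=> -[ii']; subst i'.
by move/conf_indepP: (conf_indep_power k indI) => /(_ _ _ zi z'i'); rewrite confusable_subr zz'.
Qed.

Lemma cover_sizes_le (c1 c2 a1 a2 N k : nat) :
  0 < k -> 0 < a1 <= c1 -> 0 < a2 <= c2 -> c1 * c2 <= N * (a1 * a2) ->
  ((c1 ^ k %/ a1 ^ k).+1 * (k * c1)).+1 * ((c2 ^ k %/ a2 ^ k).+1 * (k * c2)).+1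
    <= N ^ k * (16 * (c1 * c2) * k ^ 2).
Proof.
move=> k_gt0 /andP[a1_gt0 a1c1] /andP[a2_gt0 a2c2] cN.
set x1 := c1 ^ k %/ a1 ^ k; set x2 := c2 ^ k %/ a2 ^ k.
have x1_gt0 : 0 < x1 by rewrite divn_gt0 ?expn_gt0 ?a1_gt0 // leq_exp2r.
have x2_gt0 : 0 < x2 by rewrite divn_gt0 ?expn_gt0 ?a2_gt0 // leq_exp2r.
have x12N : x1 * x2 <= N ^ k.
  rewrite -(@leq_pmul2r ((a1 * a2) ^ k)) ?expn_gt0 ?muln_gt0 ?a1_gt0 ?a2_gt0 //.
  apply: (@leq_trans ((c1 * c2) ^ k)); last by rewrite -expnMn leq_exp2r.
  rewrite !expnMn mulnACA; apply: leq_mul; exact: leq_divM.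
have factor_le x c : 0 < x -> 0 < c -> (x.+1 * (k * c)).+1 <= 4 * x * (k * c) by nia.
apply: leq_trans (leq_mul (factor_le _ _ x1_gt0 _) (factor_le _ _ x2_gt0 _)) _.
- exact: leq_trans a1c1.
- exact: leq_trans a2c2.
have -> : 4 * x1 * (k * c1) * (4 * x2 * (k * c2)) = x1 * x2 * (16 * (c1 * c2) * k ^ 2) by ring.
by rewrite leq_mul2r x12N orbT.
Qed.

Lemma ic_code_gunion_split (V1 V2 : finType) (S : finZmodType) (G : rel V1) (H : rel V2)
    (P : finType) (E : {ffun (V1 + V2)%type -> S} -> P) (k : nat) :
  0 < k -> ic_code (gunion G H) E ->
  exists (P1 P2 : finType) (E1 : {ffun ('I_k * V1)%type -> S} -> P1)
         (E2 : {ffun ('I_k * V2)%type -> S} -> P2),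
    [/\ ic_code (@gcopies _ k G) E1, ic_code (@gcopies _ k H) E2, 0 < #|P1|, 0 < #|P2| &
        #|P1| * #|P2| <= #|P| ^ k * (16 * (#|{ffun V1 -> S}| * #|{ffun V2 -> S}|) * k ^ 2)].
Proof.
move=> k_gt0 EGH.
have [P1 [E1 [E1G /andP[P1_gt0 P1_le]]]] := @ic_code_gcopies_cover _ S G k k_gt0.
have [P2 [E2 [E2H /andP[P2_gt0 P2_le]]]] := @ic_code_gcopies_cover _ S H k k_gt0.
exists P1, P2, E1, E2; split=> //; apply: leq_trans (leq_mul P1_le P2_le) _.
apply: cover_sizes_le => //; last exact: card_ffun_gunion_le EGH.
- by rewrite (conf_alpha_gt0 G [ffun _ => 0%R]) conf_alpha_le_card.
- by rewrite (conf_alpha_gt0 H [ffun _ => 0%R]) conf_alpha_le_card.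
Qed.

Section BetaT.
Variables (R : realType) (V : finType) (G : rel V) (t : nat).
Local Open Scope ring_scope.

Lemma beta_t_le (P : finType) (E : {ffun V -> 'I_(2 ^ t)} -> P) :
  ic_code G E -> beta_t R G t <= (up_log 2 #|P|)%:R.
Proof.
move=> EG; apply: ge_inf; last by exists P, E; split=> //; apply/ic_solutionP.
by exists 0 => _ [P' [E' [_ ->]]].
Qed.

Lemma beta_t_attained : exists (P : finType) (E : {ffun V -> 'I_(2 ^ t)} -> P),
  ic_code G E /\ beta_t R G t = (up_log 2 #|P|)%:R.
Proof.
pose A n := exists (P : finType) (E : {ffun V -> 'I_(2 ^ t)} -> P),
  ic_code G E /\ n = up_log 2 #|P|.
have /ex_minnP[_ /asboolP[P [E [EG ->]]] minP] : exists n, `[< A n >].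
  exists (up_log 2 #|{ffun V -> 'I_(2 ^ t)}|); apply/asboolP.
  by exists _, id; split=> //; apply: ic_code_id.
exists P, E; split=> //; apply/le_anti; rewrite (beta_t_le EG) /=.
apply: lb_le_inf; first by exists (up_log 2 #|P|)%:R, P, E; split=> //; apply/ic_solutionP.
move=> _ [P' [E' [/ic_solutionP E'G ->]]]; rewrite ler_nat; apply: minP.
by apply/asboolP; exists P', E'.
Qed.

Lemma beta_t_ge0 : 0 <= beta_t R G t.
Proof. by have [P [E [_ ->]]] := beta_t_attained. Qed.

End BetaT.

Definition rate (R : realType) (f : nat -> R) : R :=
  inf [set x : R | exists t : nat, (0 < t)%N /\ x = (f t / t%:R)%R].

Section Rate.
Variable R : realType.
Local Open Scope ring_scope.

Lemma rate_le (f : nat -> R) (t : nat) :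
  (forall t, 0 <= f t) -> (0 < t)%N -> rate f <= f t / t%:R.
Proof.
move=> f_ge0 t_gt0; apply: ge_inf; last by exists t.
by exists 0 => _ [s [_ ->]]; apply: divr_ge0.
Qed.

Lemma rate_ge (f : nat -> R) (x : R) :
  (forall t, (0 < t)%N -> x <= f t / t%:R) -> x <= rate f.
Proof.
move=> x_le; apply: lb_le_inf; first by exists (f 1%N / 1%:R), 1%N.
by move=> _ [t [t_gt0 ->]]; apply: x_le.
Qed.

Lemma rate_le_add (f g h : nat -> R) : (forall t, 0 <= h t) ->
  (forall t s, (0 < t)%N -> (0 < s)%N -> h (t * s)%N <= s%:R * f t + t%:R * g s) ->
  rate h <= rate f + rate g.
Proof.
move=> h_ge0 h_le.
have split_le t s : (0 < t)%N -> (0 < s)%N -> rate h <= f t / t%:R + g s / s%:R.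
  move=> t_gt0 s_gt0; have ts_gt0 : (0 < t * s)%N by rewrite muln_gt0 t_gt0.
  apply: le_trans (rate_le h_ge0 ts_gt0) _.
  have t_neq0 : t%:R != 0 :> R by rewrite pnatr_eq0 -lt0n.
  have s_neq0 : s%:R != 0 :> R by rewrite pnatr_eq0 -lt0n.
  rewrite ler_pdivrMr ?ltr0n //; apply: le_trans (h_le t s t_gt0 s_gt0) _.
  suff -> : (f t / t%:R + g s / s%:R) * (t * s)%:R = s%:R * f t + t%:R * g s by [].
  by rewrite natrM; field; rewrite s_neq0.
rewrite -lerBlDl; apply: rate_ge => s s_gt0; rewrite lerBlDl -lerBlDr.
by apply: rate_ge => t t_gt0; rewrite lerBlDr; apply: split_le.
Qed.

End Rate.

Lemma up_logM_le (a b : nat) : (up_log 2 (a * b) <= up_log 2 a + up_log 2 b)%N.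
Proof. by apply: up_log_min => //; rewrite expnD leq_mul ?up_logP. Qed.

Lemma up_logX_le (a k : nat) : (up_log 2 (a ^ k) <= k * up_log 2 a)%N.
Proof.
apply: up_log_min => //; rewrite mulnC expnM.
by case: k => [|k]; rewrite ?expn0 // leq_exp2r // up_logP.
Qed.

Lemma up_logM_ge (a b : nat) : (0 < a)%N -> (0 < b)%N ->
  (up_log 2 a + up_log 2 b <= (up_log 2 (a * b)).+1)%N.
Proof.
move=> a_gt0 b_gt0; case: (leqP a 1) => a_le1.
  have /eqP -> : up_log 2 a == 0%N by rewrite up_log_eq0 a_le1 orbT.
  by rewrite add0n leqW // leq_up_log // leq_pmull.
case: (leqP b 1) => b_le1.
  have /eqP -> : up_log 2 b == 0%N by rewrite up_log_eq0 b_le1 orbT.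
  by rewrite addn0 leqW // leq_up_log // leq_pmulr.
have la := up_log_gtn (isT : (1 < 2)%N) a_le1.
have lb := up_log_gtn (isT : (1 < 2)%N) b_le1.
have la_gt0 : (0 < up_log 2 a)%N by rewrite up_log_gt0 a_le1.
have lb_gt0 : (0 < up_log 2 b)%N by rewrite up_log_gt0 b_le1.
have : (2 ^ ((up_log 2 a).-1 + (up_log 2 b).-1) < 2 ^ up_log 2 (a * b))%N.
  rewrite expnD; apply: leq_trans (up_logP _ _) => //.
  apply: (@leq_trans ((2 ^ (up_log 2 a).-1).+1 * (2 ^ (up_log 2 b).-1).+1)).
    by rewrite mulSnr mulnSr; lia.
  exact: leq_mul.
rewrite ltn_exp2l //; lia.
Qed.

Section Asymptotics.
Variable R : realType.
Local Open Scope ring_scope.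

Lemma not_linearly_bounded (Y K : R) : 0 < Y -> ~ (forall j : nat, Y * j.+1%:R <= K).
Proof.
move=> Y_gt0 YK.
have := archi_boundP (divr_ge0 (normr_ge0 K) (ltW Y_gt0)).
rewrite ltr_pdivrMr // mulrC => Kn; set n := Num.Def.archi_bound _ in Kn.
have : Y * n%:R < Y * n.+1%:R by rewrite ltr_pM2l // ltr_nat.
by have := YK n; have := ler_norm K; lra.
Qed.

(* Since (j + 1)^2 <= 4^j, a linear error term is negligible against 4^j. *)
Lemma le_div_of_exp4_bound (X B T : R) (K : nat) : 0 < T ->
  (forall j : nat, X * T * (4 ^ j)%:R <= B * (4 ^ j)%:R + (K * j.+1)%:R) -> X <= B / T.
Proof.
move=> T_gt0 XB; rewrite ler_pdivlMr // leNgt; apply/negP => BX.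
have Y_gt0 : 0 < X * T - B by rewrite subr_gt0.
apply: (@not_linearly_bounded _ K%:R Y_gt0) => j.
have sq_le : (j.+1 * j.+1 <= 4 ^ j)%N.
  by rewrite -[4%N]/(2 ^ 2)%N -expnM mulnC expnM; apply: leq_mul; apply: ltn_expl.
rewrite -(@ler_pM2r _ j.+1%:R) ?ltr0Sn // -mulrA -!natrM.
apply: le_trans (_ : (X * T - B) * (4 ^ j)%:R <= _); first by rewrite ler_pM2l // ler_nat.
by rewrite mulrBl lerBlDr [X in _ <= X]addrC; apply: XB.
Qed.

Lemma le_up_log_div (X : R) (t N C : nat) : (0 < t)%N ->
  (forall k, (0 < k)%N -> exists p1 p2 : nat, [/\ (0 < p1)%N, (0 < p2)%N,
      (p1 * p2 <= N ^ k * (C * k ^ 2))%N &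
      X * (t * k)%:R <= (up_log 2 p1 + up_log 2 p2)%:R]) ->
  X <= (up_log 2 N)%:R / t%:R.
Proof.
move=> t_gt0 Xp; apply: (@le_div_of_exp4_bound _ _ _ (up_log 2 C + 5)); first by rewrite ltr0n.
move=> j; have k_gt0 : (0 < 4 ^ j)%N by rewrite expn_gt0.
have [p1 [p2 [p1_gt0 p2_gt0 p12 Xp12]]] := Xp _ k_gt0.
set k := (4 ^ j)%N in k_gt0 p12 Xp12 *.
have logC : (up_log 2 (C * k ^ 2) <= up_log 2 C + 4 * j)%N.
  apply: up_log_min => //; rewrite expnD leq_mul ?up_logP //.
  by rewrite /k -[4%N]/(2 ^ 2)%N -!expnM leq_exp2l //; lia.
have logp12 : (up_log 2 p1 + up_log 2 p2 <= k * up_log 2 N + (up_log 2 C + 5) * j.+1)%N.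
  apply: leq_trans (up_logM_ge p1_gt0 p2_gt0) _.
  have := leq_trans (leq_up_log 2 p12) (up_logM_le _ _).
  have := up_logX_le N k; lia.
rewrite -mulrA -!natrM -natrD; apply: le_trans Xp12 _.
by rewrite ler_nat mulnC.
Qed.

Lemma rate_add_le (f g : nat -> R) (t N C : nat) :
  (forall t, 0 <= f t) -> (forall t, 0 <= g t) -> (0 < t)%N ->
  (forall k, (0 < k)%N -> exists p1 p2 : nat, [/\ (0 < p1)%N, (0 < p2)%N,
      (p1 * p2 <= N ^ k * (C * k ^ 2))%N,
      f (t * k)%N <= (up_log 2 p1)%:R & g (t * k)%N <= (up_log 2 p2)%:R]) ->
  rate f + rate g <= (up_log 2 N)%:R / t%:R.
Proof.
move=> f_ge0 g_ge0 t_gt0 fg_le; apply: (le_up_log_div (C := C)) => // k k_gt0.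
have [p1 [p2 [p1_gt0 p2_gt0 p12 fp1 gp2]]] := fg_le k k_gt0.
exists p1, p2; split=> //; have tk_gt0 : (0 < t * k)%N by rewrite muln_gt0 t_gt0.
rewrite natrD mulrDl; apply: lerD; rewrite -ler_pdivlMr ?ltr0n //.
- by apply: le_trans (rate_le f_ge0 tk_gt0) _; rewrite ler_pM2r ?invr_gt0 ?ltr0n.
- by apply: le_trans (rate_le g_ge0 tk_gt0) _; rewrite ler_pM2r ?invr_gt0 ?ltr0n.
Qed.

End Asymptotics.

Lemma ic_code_gcopies_exp (V S P : finType) (G : rel V) (k t n : nat)
    (E : {ffun ('I_k * V)%type -> S} -> P) :
  #|S| = (2 ^ t)%N -> (t * k = n)%N -> ic_code (@gcopies _ k G) E ->
  exists E' : {ffun V -> 'I_(2 ^ n)} -> P, ic_code G E'.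
Proof.
move=> cardS tkn /ic_code_gcopies_power[E' E'G]; apply: ic_code_alphabet E'G.
by rewrite card_ffun card_ord cardS card_ord -expnM tkn.
Qed.

Lemma ic_code_gcopies_gcopies (V S P : finType) (G : rel V) (a b n : nat)
    (E : {ffun ('I_a * ('I_b * V))%type -> S} -> P) :
  (a * b = n)%N -> ic_code (@gcopies _ a (@gcopies _ b G)) E ->
  exists E' : {ffun ('I_n * V)%type -> S} -> P, ic_code (@gcopies _ n G) E'.
Proof.
move=> abn; have [|h [h' hK h'K]] := @eq_card_bij ('I_a * 'I_b)%type 'I_n.
  by rewrite card_prod !card_ord.
apply: (ic_code_vertex_map (g := fun x => (h (x.1, x.2.1), x.2.2))).
  by move=> [c v]; exists ((h' c).1, ((h' c).2, v)); rewrite /= -surjective_pairing h'K.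
move=> [x [y v]] [x' [y' w]]; rewrite /gcopies /=.
by case/andP=> /eqP -> /andP[/eqP -> ->]; rewrite eqxx.
Qed.

Lemma ic_code_gcopies_gunion (V1 V2 S P : finType) (G : rel V1) (H : rel V2) (n : nat)
    (E : {ffun (('I_n * V1) + ('I_n * V2))%type -> S} -> P) :
  ic_code (gunion (@gcopies _ n G) (@gcopies _ n H)) E ->
  exists E' : {ffun ('I_n * (V1 + V2))%type -> S} -> P, ic_code (@gcopies _ n (gunion G H)) E'.
Proof.
apply: (ic_code_vertex_map
  (g := fun x => match x with inl (c, v) => (c, inl v) | inr (c, v) => (c, inr v) end)).
  by move=> [c [v|v]]; [exists (inl (c, v)) | exists (inr (c, v))].
by move=> [[c v]|[c v]] [[c' w]|[c' w]].
Qed.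

Lemma ic_code_gunion_gcopies (V1 V2 S P : finType) (G : rel V1) (H : rel V2) (n : nat)
    (E : {ffun ('I_n * (V1 + V2))%type -> S} -> P) :
  ic_code (@gcopies _ n (gunion G H)) E ->
  exists E' : {ffun (('I_n * V1) + ('I_n * V2))%type -> S} -> P,
    ic_code (gunion (@gcopies _ n G) (@gcopies _ n H)) E'.
Proof.
apply: (ic_code_vertex_map (g := fun x : 'I_n * (V1 + V2) =>
  match x.2 with inl v => inl (x.1, v) | inr v => inr (x.1, v) end)).
  by move=> [[c v]|[c v]]; [exists (c, inl v) | exists (c, inr v)].
by move=> [c [v|v]] [c' [w|w]]; rewrite /gcopies /= ?andbF.
Qed.

Lemma up_log_card_pair (P1 P2 : finType) (s t : nat) :
  (up_log 2 #|{: {ffun 'I_s -> P1} * {ffun 'I_t -> P2}}|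
    <= s * up_log 2 #|P1| + t * up_log 2 #|P2|)%N.
Proof.
rewrite card_prod !card_ffun !card_ord; apply: leq_trans (up_logM_le _ _) _.
by apply: leq_add; apply: up_logX_le.
Qed.

Lemma betaE (R : realType) (V : finType) (G : rel V) : beta R G = rate (beta_t R G).
Proof. by []. Qed.

Lemma beta_starE (R : realType) (V : finType) (G : rel V) :
  beta_star R G = rate (fun t => beta_t R (@gcopies _ t G) 1).
Proof. by []. Qed.

Section Additivity.
Variables (R : realType) (V1 V2 : finType) (G : rel V1) (H : rel V2).
Local Open Scope ring_scope.

Lemma beta_t_gunion_le (t s : nat) :
  beta_t R (gunion G H) (t * s) <= s%:R * beta_t R G t + t%:R * beta_t R H s.
Proof.
have [PG [EG [EGG ->]]] := beta_t_attained R G t.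
have [PH [EH [EHH ->]]] := beta_t_attained R H s.
have [EG' EG'G] :=
  ic_code_gcopies_exp (card_ord _) (erefl (t * s)%N) (ic_code_gcopies (k := s) EGG).
have [EH' EH'H] :=
  ic_code_gcopies_exp (card_ord _) (mulnC s t) (ic_code_gcopies (k := t) EHH).
apply: le_trans (beta_t_le R (ic_code_gunion EG'G EH'H)) _.
by rewrite -!natrM -natrD ler_nat up_log_card_pair.
Qed.

Lemma beta_t_gunion_ge (t : nat) : (0 < t)%N ->
  beta R G + beta R H <= beta_t R (gunion G H) t / t%:R.
Proof.
move=> t_gt0; have [P [E [EGH ->]]] := beta_t_attained R (gunion G H) t.
pose S := 'I_((2 ^ t).-1.+1).
have cardS : #|S| = (2 ^ t)%N by rewrite card_ord prednK // expn_gt0.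
have [E' E'GH] : exists E' : {ffun (V1 + V2)%type -> S} -> P, ic_code (gunion G H) E'.
  by apply: ic_code_alphabet EGH; rewrite cardS card_ord.
rewrite !betaE; apply: (rate_add_le (C := 16 * (#|{ffun V1 -> S}| * #|{ffun V2 -> S}|))) => //.
- exact: beta_t_ge0.
- exact: beta_t_ge0.
move=> k k_gt0.
have [P1 [P2 [E1 [E2 [E1G E2H P1_gt0 P2_gt0 P12]]]]] := ic_code_gunion_split k_gt0 E'GH.
have [E1' E1'G] := ic_code_gcopies_exp cardS (erefl (t * k)%N) E1G.
have [E2' E2'H] := ic_code_gcopies_exp cardS (erefl (t * k)%N) E2H.
by exists #|P1|, #|P2|; split; rewrite // (beta_t_le R E1'G, beta_t_le R E2'H).
Qed.

Lemma beta_gunion : beta R (gunion G H) = beta R G + beta R H.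
Proof.
apply/le_anti/andP; split.
  rewrite !betaE; apply: rate_le_add => [t|t s _ _]; first exact: beta_t_ge0.
  exact: beta_t_gunion_le.
by rewrite [beta R (gunion _ _)]betaE; apply: rate_ge => t; apply: beta_t_gunion_ge.
Qed.

Lemma beta_t_gcopies_gunion_le (t s : nat) :
  beta_t R (@gcopies _ (t * s) (gunion G H)) 1
    <= s%:R * beta_t R (@gcopies _ t G) 1 + t%:R * beta_t R (@gcopies _ s H) 1.
Proof.
have [PG [EG [EGG ->]]] := beta_t_attained R (@gcopies _ t G) 1.
have [PH [EH [EHH ->]]] := beta_t_attained R (@gcopies _ s H) 1.
have [EG' EG'G] := ic_code_gcopies_gcopies (mulnC s t) (ic_code_gcopies (k := s) EGG).
have [EH' EH'H] := ic_code_gcopies_gcopies (erefl (t * s)%N) (ic_code_gcopies (k := t) EHH).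
have [E E_GH] := ic_code_gcopies_gunion (ic_code_gunion EG'G EH'H).
apply: le_trans (beta_t_le R E_GH) _.
by rewrite -!natrM -natrD ler_nat up_log_card_pair.
Qed.

Lemma beta_t_gcopies_gunion_ge (t : nat) : (0 < t)%N ->
  beta_star R G + beta_star R H <= beta_t R (@gcopies _ t (gunion G H)) 1 / t%:R.
Proof.
move=> t_gt0; have [P [E [EGH ->]]] := beta_t_attained R (@gcopies _ t (gunion G H)) 1.
have [E' E'GH] := ic_code_gunion_gcopies EGH.
have [E'' E''GH] : exists E'' : {ffun (('I_t * V1) + ('I_t * V2))%type -> 'I_2} -> P,
    ic_code (gunion (@gcopies _ t G) (@gcopies _ t H)) E''.
  by apply: ic_code_alphabet E'GH; rewrite !card_ord.
rewrite !beta_starE.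
apply: (rate_add_le
  (C := 16 * (#|{ffun ('I_t * V1)%type -> 'I_2}| * #|{ffun ('I_t * V2)%type -> 'I_2}|))) => //.
- by move=> n; apply: beta_t_ge0.
- by move=> n; apply: beta_t_ge0.
move=> k k_gt0.
have [P1 [P2 [E1 [E2 [E1G E2H P1_gt0 P2_gt0 P12]]]]] := ic_code_gunion_split k_gt0 E''GH.
have [E1' E1'G] : exists E1' : {ffun ('I_k * ('I_t * V1))%type -> 'I_(2 ^ 1)} -> P1,
    ic_code (@gcopies _ k (@gcopies _ t G)) E1' by apply: ic_code_alphabet E1G; rewrite !card_ord.
have [E2' E2'H] : exists E2' : {ffun ('I_k * ('I_t * V2))%type -> 'I_(2 ^ 1)} -> P2,
    ic_code (@gcopies _ k (@gcopies _ t H)) E2' by apply: ic_code_alphabet E2H; rewrite !card_ord.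
have [E1'' E1''G] := ic_code_gcopies_gcopies (mulnC k t) E1'G.
have [E2'' E2''H] := ic_code_gcopies_gcopies (mulnC k t) E2'H.
by exists #|P1|, #|P2|; split; rewrite // (beta_t_le R E1''G, beta_t_le R E2''H).
Qed.

Lemma beta_star_gunion : beta_star R (gunion G H) = beta_star R G + beta_star R H.
Proof.
apply/le_anti/andP; split.
  rewrite !beta_starE; apply: rate_le_add => [t|t s _ _]; first exact: beta_t_ge0.
  exact: beta_t_gcopies_gunion_le.
rewrite [beta_star R (gunion _ _)]beta_starE.
by apply: rate_ge => t; apply: beta_t_gcopies_gunion_ge.
Qed.

End Additivity.

Local Open Scope ring_scope.

Theorem lemma2p16 (R : realType) (V1 V2 : finType) (G : rel V1) (H : rel V2) :
  undirected G -> undirected H ->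
  beta R (gunion G H) = beta R G + beta R H /\
  beta_star R (gunion G H) = beta_star R G + beta_star R H.
Proof. by move=> _ _; split; [apply: beta_gunion | apply: beta_star_gunion]. Qed.
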